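(* Let $t_{11},t_{14},t_{21},t_{22},t_{32}\in\mathbb{C}$ be constants and let $\varepsilon:L\to\bar L$ be defined by $\langle\varepsilon(x),y\rangle=\tilde\varepsilon(x,y)$, where $$\tilde\varepsilon=t_{32}\,\bar T^*\wedge\bar W^*-t_{11}\,\bar T^*\wedge\omega^*-t_{21}\,\bar T^*\wedge\rho^*-t_{22}\,\bar W^*\wedge\rho^*+t_{14}\,\omega^*\wedge\rho^*,$$ and suppose $\varepsilon$ is small enough that $L_\varepsilon=\{x+\varepsilon(x):x\in L\}$ satisfies $L_\varepsilon\cap\bar L_\varepsilon=0$ (so that $L_\varepsilon$ is a generalized complex structure). Then the type of $L_\varepsilon$ is constant on $N$ and equals $0$ (symplectic type) if $t_{14}\neq0$, and $2$ (complex type) if $t_{14}=0$.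
   Context: Let $N$ be a primary Kodaira surface (real dimension 4). As a real manifold $N$ is parallelizable: there are global real vector fields $X,Y,U,V$ forming a frame of $T_N$ whose only nonzero Lie bracket is $[X,Y]=U$, with standard complex structure $JX=Y$, $JY=-X$, $JU=V$, $JV=-U$. Put $T=\frac12(X-iY)$, $W=\frac12(U-iV)$; then $\{T,W,\bar T,\bar W\}$ is a global frame of $T_N\otimes\mathbb{C}$ whose only nonzero bracket is $[T,\bar T]=\frac i2(W+\bar W)$, and $\{\omega,\rho,\bar\omega,\bar\rho\}$ is the dual coframe. On $(T_N\oplus T_N^* )\otimes\mathbb{C}$ use the inner product $\langle X+\sigma,Y+\tau\rangle=\frac12(\sigma(Y)+\tau(X))$ and the Courant bracket $[X+\sigma,Y+\tau]=[X,Y]+\mathcal L_X\tau-\mathcal L_Y\sigma-\frac12 d(i_X\tau-i_Y\sigma)$. A generalized complex structure is a maximal isotropic, Courant-involutive subbundle $E\subset(T_N\oplus T_N^* )\otimes\mathbb{C}$ with $E\cap\bar E=0$; its type at $p\in N$ is the complex codimension of $\pi_T(E_p)$ in $T_pN\otimes\mathbb{C}$, where $\pi_T$ is the projection to the tangent part. $L$ is the subbundle spanned by $\bar T,\bar W,\omega,\rho$, $\bar L$ the one spanned by $T,W,\bar\omega,\bar\rho$, and $\{\bar T^*,\bar W^*,\omega^*,\rho^*\}$ is the frame of $L^*$ dual to $\{\bar T,\bar W,\omega,\rho\}$. Wedge products are evaluated as $(\alpha\wedge\beta)(x,y)=\alpha(x)\beta(y)-\alpha(y)\beta(x)$. (For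 these $\tilde\varepsilon$ the Maurer–Cartan equation holds, so $L_\varepsilon$ is Courant involutive.) *)

(* Fiberwise model of (T_N ⊕ T_N^* ) ⊗ C in the global frame. *)
From HB Require Import structures.
From mathcomp Require Import all_boot all_order all_algebra.
Set Implicit Arguments. Unset Strict Implicit. Unset Printing Implicit Defensive.
Import Order.TTheory GRing.Theory Num.Theory.
Local Open Scope ring_scope.

(* Coordinates of a vector v : 'rV[C]_8 of (T ⊕ T^* ) ⊗ C, in the global frame
   index 0 : T, 1 : W, 2 : Tbar, 3 : Wbar   (tangent part)
   index 4 : ω, 5 : ρ, 6 : ωbar, 7 : ρbar   (cotangent part, dual coframe:
   index 4+k is dual to index k). *)
Definition ix (k : nat) : 'I_8 := inord k.

Section Fiber.
Variable C : numClosedFieldType.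

(* L = span(Tbar, Wbar, ω, ρ) : rows are the frame vectors e_2, e_3, e_4, e_5 *)
Definition Lmx : 'M[C]_(4, 8) :=
  \matrix_(i < 4, j < 8) ((j : nat) == (i + 2)%N)%:R.

(* Lbar = span(T, W, ωbar, ρbar) : rows e_0, e_1, e_6, e_7 *)
Definition Lbarmx : 'M[C]_(4, 8) :=
  \matrix_(i < 4, j < 8) ((j : nat) == nth 0%N [:: 0; 1; 6; 7]%N i)%:R.

(* <X + σ, Y + τ> = 1/2 (σ(Y) + τ(X)), complex bilinear *)
Definition pairing (u v : 'rV[C]_8) : C :=
  2^-1 * \sum_(k < 4) (u 0 (ix (4 + k)) * v 0 (ix k) + v 0 (ix (4 + k)) * u 0 (ix k)).

(* frame of L^* dual to (Tbar, Wbar, ω, ρ), evaluated on elements of L *)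
Definition Tbs (x : 'rV[C]_8) : C := x 0 (ix 2).
Definition Wbs (x : 'rV[C]_8) : C := x 0 (ix 3).
Definition oms (x : 'rV[C]_8) : C := x 0 (ix 4).
Definition rhs (x : 'rV[C]_8) : C := x 0 (ix 5).

Definition wedge (a b : 'rV[C]_8 -> C) (x y : 'rV[C]_8) : C :=
  a x * b y - a y * b x.

Definition eps_tilde (t11 t14 t21 t22 t32 : C) (x y : 'rV[C]_8) : C :=
  t32 * wedge Tbs Wbs x y - t11 * wedge Tbs oms x y - t21 * wedge Tbs rhs x y
  - t22 * wedge Wbs rhs x y + t14 * wedge oms rhs x y.

(* complex conjugation of (T ⊕ T^* ) ⊗ C in the frame:
   conj(T)=Tbar, conj(W)=Wbar, conj(ω)=ωbar, conj(ρ)=ρbar *)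
Definition sw (j : 'I_8) : 'I_8 :=
  ix (if (j < 4)%N then ((j + 2) %% 4)%N else (4 + (j + 2) %% 4)%N).

(* rows of conj_mx A span the complex conjugate of the row space of A *)
Definition conj_mx m (A : 'M[C]_(m, 8)) : 'M[C]_(m, 8) :=
  \matrix_(i < m, j < 8) (A i (sw j))^*.

Definition piT : 'M[C]_(8, 4) := \matrix_(i < 8, j < 4) ((i : nat) == j)%:R.

(* type of the subspace spanned by the rows of A: complex codimension of
   π_T(row space of A) in T ⊗ C (complex dimension 4) *)
Definition gc_type m (A : 'M[C]_(m, 8)) : nat := (4 - \rank (A *m piT))%N.

End Fiber.

(* The type is 4 - rank of the tangent projection of L_eps, whose rows are the
   vectors  e_k + eps(e_k)  for the frame  e_2, ..., e_5 = Tbar, Wbar, omega, rho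
   of L.  Since eps takes values in Lbar = span(T, W, omegabar, rhobar), its
   Tbar- and Wbar-components vanish; and for x in span(omega, rho) the
   T- and W-components of eps(x) are read off from <eps(x), y> = eps~(x, y)
   with y in {omega, rho}, where eps~ reduces to t14 omega^* /\ rho^*.
   Hence the tangent projection of L_eps has the shape

       [ a0    a1     1  0 ]
       [ b0    b1     0  1 ]
       [ 0     2 t14  0  0 ]
       [ -2t14 0      0  0 ]

   whose rank is 4 if t14 <> 0 and 2 otherwise. *)
From HB Require Import structures.
From mathcomp Require Import all_boot all_order all_algebra.
Import Order.TTheory GRing.Theory Num.Theory.
Set Implicit Arguments. Unset Strict Implicit. Unset Printing Implicit Defensive.
Local Open Scope ring_scope.

Section Frame.
Variable C : numClosedFieldType.

Lemma ixK (k : nat) : (k < 8)%N -> (ix k : nat) = k.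
Proof. by move=> hk; rewrite /ix inordK. Qed.

Lemma ix_eqE (m n : nat) : (m < 8)%N -> (n < 8)%N -> (ix m == ix n) = (m == n).
Proof. by move=> hm hn; rewrite -val_eqE /= !ixK. Qed.

Definition frame (k : nat) : 'rV[C]_8 := delta_mx 0 (ix k).

Lemma frame_coord (k n : nat) : (k < 8)%N -> (n < 8)%N ->
  frame k 0 (ix n) = (k == n)%:R.
Proof. by move=> hk hn; rewrite mxE eqxx ix_eqE // eq_sym. Qed.

Lemma row_Lmx (i : 'I_4) : row i (Lmx C) = frame (i + 2).
Proof.
have hi : (i + 2 < 8)%N by case: i => [[|[|[|[|]]]]].
by apply/rowP => j; rewrite !mxE eqxx -val_eqE /= ixK.
Qed.

Lemma frame_sub_L (k : nat) : (2 <= k < 6)%N -> (frame k <= Lmx C)%MS.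
Proof.
case/andP=> h2 h6; have hk : (k - 2 < 4)%N by rewrite ltn_subLR.
by rewrite -(subnK h2) -[(k - 2)%N]/(val (Ordinal hk)) -row_Lmx row_sub.
Qed.

Lemma Lmx_mulE (A : 'M[C]_8) (i : 'I_4) (j : 'I_8) :
  (Lmx C *m A) i j = A (ix (i + 2)) j.
Proof.
have -> : (Lmx C *m A) i j = row i (Lmx C *m A) 0 j by rewrite [RHS]mxE.
by rewrite row_mul row_Lmx /frame -rowE mxE.
Qed.

Lemma mul_piT (A : 'M[C]_(4, 8)) (i j : 'I_4) : (A *m piT C) i j = A i (ix j).
Proof.
have hj : (j < 8)%N by apply: leq_trans (ltn_ord j) _.
rewrite mxE (bigD1 (ix j)) //= big1 ?addr0 => [|l /negbTE hl].
  by rewrite mxE ixK // eqxx mulr1.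
by rewrite mxE -[_ == _]/(l == ix j :> 'I_8) -val_eqE /= ixK // in hl *; rewrite hl mulr0.
Qed.

Lemma Lbar_coord (v : 'rV[C]_8) (n : nat) : (v <= Lbarmx C)%MS ->
  (n == 2)%N || (n == 3)%N -> v 0 (ix n) = 0.
Proof.
move=> /submxP [D ->] hn; have hn8 : (n < 8)%N by case/orP: hn => /eqP ->.
rewrite mxE big1 // => k _; rewrite mxE ixK //.
by case: k => [[|[|[|[|k]]]] hk] //=; case/orP: hn => /eqP -> /=; rewrite mulr0.
Qed.

Lemma pairing_coframe (u : 'rV[C]_8) (k : nat) : (k < 4)%N ->
  pairing u (frame (4 + k)) = 2^-1 * u 0 (ix k).
Proof.
move=> hk; rewrite /pairing; congr (_ * _).
have hk8 : (4 + k < 8)%N by rewrite ltn_add2l (leq_trans hk).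
rewrite (bigD1 (Ordinal hk)) //= big1 => [|j /negbTE hj].
  have k_neq : (4 + k == k)%N = false by rewrite -{2}[k]add0n eqn_add2r.
  rewrite !frame_coord ?(leq_trans hk) //= eqxx k_neq.
  by rewrite mulr0 add0r mul1r addr0.
have hj4 : (j < 4 + k)%N by apply: leq_trans (ltn_ord j) (leq_addr _ _).
rewrite !frame_coord ?ltn_add2l ?(leq_trans (ltn_ord j)) //.
rewrite eqn_add2l (gtn_eqF hj4) -val_eqE /= eq_sym in hj *.
by rewrite hj mulr0 mul0r addr0.
Qed.

Lemma eps_tilde_omega_rho (t11 t14 t21 t22 t32 : C) :
  let eps := eps_tilde t11 t14 t21 t22 t32 in
  [/\ eps (frame 4) (frame 4) = 0, eps (frame 4) (frame 5) = t14,
      eps (frame 5) (frame 4) = - t14 & eps (frame 5) (frame 5) = 0].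
Proof.
by rewrite /eps_tilde /wedge /Tbs /Wbs /oms /rhs !frame_coord //=;
  split; rewrite !(mulr0, mul0r, mulr1, mul1r, subrr, subr0, sub0r, oppr0,
    add0r, addr0, mulrN1).
Qed.

Definition tangent_shape (a0 a1 b0 b1 c : C) : 'M[C]_4 :=
  \matrix_(i < 4, j < 4) nth 0 (nth [::]
    [:: [:: a0; a1; 1; 0]; [:: b0; b1; 0; 1]; [:: 0; c; 0; 0]; [:: -c; 0; 0; 0]]
    i) j.

Lemma rank_tangent_shape (a0 a1 b0 b1 c : C) :
  \rank (tangent_shape a0 a1 b0 b1 c) = if c != 0 then 4%N else 2%N.
Proof.
set M := tangent_shape _ _ _ _ _.
have [c0 | c_neq0] := eqVneq c 0 => /=; last first.
  (* B is an explicit left inverse of M up to the scalar c. *)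
  pose B : 'M[C]_4 := \matrix_(i < 4, j < 4) nth 0 (nth [::]
    [:: [:: 0; 0; 0; -1]; [:: 0; 0; 1; 0]; [:: c; 0; -a1; a0]; [:: 0; c; -b1; b0]]
    i) j.
  have BM : B *m M = c%:M.
    apply/matrixP => i j; rewrite !mxE !big_ord_recl big_ord0 !mxE /bump /=.
    case: i => [[|[|[|[|i]]]] hi] //; case: j => [[|[|[|[|j]]]] hj] //=;
    rewrite !(mul0r, mulr0, mul1r, mulr1, addr0, add0r, mulN1r, mulNr, mulrN,
      opprK) //;
    by rewrite mulr0n mulrC subrr.
  apply/eqP; rewrite eqn_leq rank_leq_row.
  apply: (mulmx1_min_rank (M := B) (N := (c^-1)%:M)).
  by rewrite BM -scalar_mxM mulfV.
(* For c = 0, M factors through its first two rows, on which it has rank 2. *)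
pose R : 'M[C]_(2, 4) := \matrix_(i < 2, j < 4) ((i : nat) == j)%:R.
pose S : 'M[C]_(4, 2) := \matrix_(i < 4, j < 2) ((i : nat) == j)%:R.
pose P : 'M[C]_(4, 2) := \matrix_(i < 4, j < 2) ((i : nat) == (j + 2)%N)%:R.
apply/eqP; rewrite eqn_leq; apply/andP; split.
  have -> : M = S *m (R *m M).
    apply/matrixP => i j; rewrite !(mxE, big_ord_recl, big_ord0) /bump /= c0.
    case: i => [[|[|[|[|i]]]] hi] //; case: j => [[|[|[|[|j]]]] hj] //=;
    by rewrite !(mul0r, mulr0, mul1r, mulr1, addr0, add0r, oppr0).
  exact: leq_trans (mxrankM_maxl S _) (rank_leq_col S).
apply: (mulmx1_min_rank (M := R) (N := P)).
apply/matrixP => i j; rewrite !(mxE, big_ord_recl, big_ord0) /bump /= c0.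
case: i => [[|[|i]] hi] //; case: j => [[|[|j]] hj] //=;
by rewrite !(mul0r, mulr0, mul1r, mulr1, addr0, add0r).
Qed.

End Frame.

Section Deformation.
Variables (C : numClosedFieldType) (t11 t14 t21 t22 t32 : C) (E : 'M[C]_8).

Hypothesis eps_spec : forall x : 'rV[C]_8, (x <= Lmx C)%MS ->
  (x *m E <= Lbarmx C)%MS /\
  (forall y : 'rV[C]_8, (y <= Lmx C)%MS ->
     pairing (x *m E) y = eps_tilde t11 t14 t21 t22 t32 x y).

Lemma frame_mulE (k : nat) (j : 'I_8) : (frame C k *m E) 0 j = E (ix k) j.
Proof. by rewrite /frame -rowE mxE. Qed.

Lemma eps_Lbar_entry (m n : nat) : (2 <= m < 6)%N -> (n == 2)%N || (n == 3)%N ->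
  E (ix m) (ix n) = 0.
Proof.
by move=> hm hn; rewrite -frame_mulE (Lbar_coord _ hn) // (eps_spec (frame_sub_L C hm)).1.
Qed.

Lemma eps_tangent_entry (m k : nat) : (2 <= m < 6)%N -> (k < 2)%N ->
  E (ix m) (ix k) = 2 * eps_tilde t11 t14 t21 t22 t32 (frame C m) (frame C (4 + k)).
Proof.
move=> hm hk; have hk4 : (k < 4)%N by apply: leq_trans hk _.
have hL : (frame C (4 + k) <= Lmx C)%MS by apply: frame_sub_L; case: k hk {hk4}=> [|[]].
rewrite -((eps_spec (frame_sub_L C hm)).2 _ hL) pairing_coframe // frame_mulE.
by rewrite mulrA divff ?mul1r // pnatr_eq0.
Qed.

Lemma tangent_projection :
  Lmx C *m (1%:M + E) *m piT C =
  tangent_shape (E (ix 2) (ix 0)) (E (ix 2) (ix 1)) (E (ix 3) (ix 0))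
                (E (ix 3) (ix 1)) (2 * t14).
Proof.
have [e44 e45 e54 e55] := eps_tilde_omega_rho t11 t14 t21 t22 t32.
have Tbar0 m : (2 <= m < 6)%N -> E (ix m) (ix 2) = 0 by move=> hm; apply: eps_Lbar_entry.
have Wbar0 m : (2 <= m < 6)%N -> E (ix m) (ix 3) = 0 by move=> hm; apply: eps_Lbar_entry.
apply/matrixP => i j; rewrite mul_piT Lmx_mulE !mxE.
case: i => [[|[|[|[|i]]]] hi] //; case: j => [[|[|[|[|j]]]] hj] //=;
rewrite ix_eqE //= ?Tbar0 ?Wbar0 ?add0r ?addr0 ?mulr1n //;
by rewrite eps_tangent_entry //= ?e44 ?e45 ?e54 ?e55 ?mulr0 ?mulrN.
Qed.

End Deformation.

Theorem proposition4p11 (C : numClosedFieldType) (t11 t14 t21 t22 t32 : C)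
    (E : 'M[C]_8) :
  (forall x : 'rV[C]_8, (x <= Lmx C)%MS ->
     (x *m E <= Lbarmx C)%MS /\
     (forall y : 'rV[C]_8, (y <= Lmx C)%MS ->
        pairing (x *m E) y = eps_tilde t11 t14 t21 t22 t32 x y)) ->
  \rank (Lmx C *m (1%:M + E) :&: conj_mx (Lmx C *m (1%:M + E)))%MS = 0%N ->
  gc_type (Lmx C *m (1%:M + E)) = (if t14 != 0 then 0%N else 2%N).
Proof.
move=> eps_spec _.
rewrite /gc_type (tangent_projection eps_spec) rank_tangent_shape.
by rewrite mulf_eq0 pnatr_eq0 /=; case: (t14 != 0).
Qed.
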